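(* Let $G$ and $H$ be graphs and let $\ell\ge 1$ be an integer. If $G$ has an $H$-partition of layered width $\ell$, then $\mathrm{tn}(G)\le 3\ell\cdot \mathrm{tn}(H)$.
   Context: All graphs are finite, simple and undirected. A $t$-track assignment of a graph $G$ is a partition of $V(G)$ into $t$ sets $V_1,\dots,V_t$ (tracks), each an independent set of $G$, together with a total order $<_i$ on each $V_i$. An X-crossing consists of two edges $(u,v)$ and $(x,y)$ with $u,x\in V_i$, $v,y\in V_j$ ($i\neq j$), $u<_i x$ and $y<_j v$. A $t$-track layout is a $t$-track assignment with no X-crossing; the track number $\mathrm{tn}(G)$ is the minimum $t$ for which $G$ has a $t$-track layout. An $H$-partition of $G$ is a partition of $V(G)$ into disjoint bags $\{A_x : x\in V(H)\}$ indexed by $V(H)$ such that for every edge $(u,v)\in E(G)$ either $u,v\in A_x$ for some $x$, or there is an edge $(x,y)\in E(H)$ with $u\in A_x$, $v\in A_y$. A layering of $G$ is an ordered partition $(V_0,V_1,\dots)$ of $V(G)$ such that for every edge $(v,w)$ with $v\in V_i$, $w\in V_j$ we have $|i-j|\le 1$. The layered width of an $H$-partition is the minimum $\ell$ such that for some layering $(V_0,V_1,\dots)$ of $G$, $|A_x\cap V_i|\le \ell$ for every $x\in V(H)$ and every $i\ge 0$. *)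

From HB Require Import structures.
From mathcomp Require Import all_boot.
From Stdlib Require Import ClassicalEpsilon.
Set Implicit Arguments. Unset Strict Implicit. Unset Printing Implicit Defensive.

Record graph := Graph {
  vert :> finType;
  adj : rel vert;
  adj_sym : symmetric adj;
  adj_irr : irreflexive adj }.

Definition decideP (P : Prop) : bool :=
  if excluded_middle_informative P then true else false.

Lemma decidePP (P : Prop) : reflect P (decideP P).
Proof. rewrite /decideP; case: excluded_middle_informative => H; by constructor. Qed.

(* A t-track assignment: tr assigns each vertex its track (tracks are
   'I_t, possibly empty); lt is a relation whose restriction to each track
   is a strict total order. *)
Definition track_layout (G : graph) (t : nat) (tr : G -> 'I_t) (lt : rel G) : Prop :=
  [/\
      (forall u v, adj u v -> tr u != tr v),
      (forall u, ~~ lt u u),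
      (forall u v w, tr u = tr v -> tr v = tr w -> lt u v -> lt v w -> lt u w),
      (forall u v, tr u = tr v -> u != v -> lt u v || lt v u)
    &
      (forall u v x y, adj u v -> adj x y ->
         tr u = tr x -> tr v = tr y -> tr u != tr v ->
         lt u x -> lt y v -> False)].

Definition has_track_layout (G : graph) (t : nat) : Prop :=
  exists (tr : G -> 'I_t) (lt : rel G), track_layout tr lt.

Lemma has_track_layout_card (G : graph) : has_track_layout G #|G|.
Proof.
exists (@enum_rank G), (fun _ _ => false); split => //.
- move=> u v uv; apply/negP => /eqP /enum_rank_inj E.
  by move: uv; rewrite E adj_irr.
- by move=> u v /enum_rank_inj ->; rewrite eqxx.
Qed.

Lemma tn_ex (G : graph) : exists t, decideP (has_track_layout G t).
Proof. by exists #|G|; apply/decidePP; apply: has_track_layout_card. Qed.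

Definition tn (G : graph) : nat := ex_minn (tn_ex G).

(* H-partition given by the bag map f : bag of x is A_x = f^-1(x). *)
Definition H_partition (G H : graph) (f : G -> H) : Prop :=
  forall u v, adj u v -> f u = f v \/ adj (f u) (f v).

Definition layering (G : graph) (L : G -> nat) : Prop :=
  forall u v, adj u v -> (L u <= (L v).+1) && (L v <= (L u).+1).

Definition width_at_most (G H : graph) (f : G -> H) (l : nat) : Prop :=
  exists L : G -> nat, layering L /\
    forall (x : H) (i : nat), #|[set v : G | (f v == x) && (L v == i)]| <= l.

Lemma lw_ex (G H : graph) (f : G -> H) : exists l, decideP (width_at_most f l).
Proof.
exists #|G|; apply/decidePP; exists (fun _ => 0); split => //.
by move=> x i; apply: max_card.
Qed.

Definition layered_width (G H : graph) (f : G -> H) : nat := ex_minn (lw_ex f).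

(* Refine a layout of H by layer and by position in a bag: a vertex v of G
   goes on the track (H-track of its bag, layer of v mod 3, rank of v among
   the vertices of its bag and layer), giving at most 3 l tn(H) tracks, each
   ordered by layer first and then by the order of the bags in H.  Edges join
   equal or consecutive layers, so the two endpoints of an edge are on distinct
   tracks and an X-crossing between two tracks stays inside one pair of layers.
   There its endpoints either lie in bags on distinct H-tracks, giving an
   X-crossing in H, or in a single bag, since adjacent bags never share an
   H-track. *)

From HB Require Import structures.
From mathcomp Require Import all_boot.
From mathcomp Require Import zify.
Set Implicit Arguments. Unset Strict Implicit.

Definition track_layout_over (G : graph) (T : finType) (tr : G -> T) (lt : rel G) :=
  [/\ (forall u v, adj u v -> tr u != tr v),
      (forall u, ~~ lt u u),
      (forall u v w, tr u = tr v -> tr v = tr w -> lt u v -> lt v w -> lt u w),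
      (forall u v, tr u = tr v -> u != v -> lt u v || lt v u)
    & (forall u v x y, adj u v -> adj x y ->
         tr u = tr x -> tr v = tr y -> tr u != tr v ->
         lt u x -> lt y v -> False)].

Lemma track_layout_overP (G : graph) (T : finType) (tr : G -> T) (lt : rel G) n :
  track_layout_over tr lt -> #|T| <= n -> has_track_layout G n.
Proof.
move=> [indep irr trans total noX] leTn.
pose tr' u := widen_ord leTn (enum_rank (tr u)).
have tr'E u v : (tr' u = tr' v) <-> (tr u = tr v).
  split; last by rewrite /tr' => ->.
  by move=> /(congr1 val) /= /val_inj /enum_rank_inj.
have tr'N u v : (tr' u != tr' v) = (tr u != tr v).
  by apply/idP/idP; apply: contra => /eqP /tr'E /eqP.
exists tr', lt; split=> //.
- by move=> u v /indep; rewrite tr'N.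
- by move=> u v w /tr'E uv /tr'E; apply: trans.
- by move=> u v /tr'E; apply: total.
- by move=> u v x y uv xy /tr'E ux /tr'E vy; rewrite tr'N; apply: noX.
Qed.

Lemma tnP (G : graph) : has_track_layout G (tn G).
Proof. by rewrite /tn; case: ex_minnP => t /decidePP. Qed.

Lemma tn_min (G : graph) n : has_track_layout G n -> tn G <= n.
Proof. by move=> Gn; rewrite /tn; case: ex_minnP => t _; apply; apply/decidePP. Qed.

Lemma layered_widthP (G H : graph) (f : G -> H) : width_at_most f (layered_width f).
Proof. by rewrite /layered_width; case: ex_minnP => l /decidePP. Qed.

Lemma layering_mod3 (G : graph) (L : G -> nat) u v :
  layering L -> adj u v -> L u = L v %[mod 3] -> L u = L v.
Proof. by move=> Lay /Lay /andP [? ?] ?; lia. Qed.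

Section ProductLayout.

Variables (G H : graph) (f : G -> H) (L : G -> nat) (l t : nat).
Variables (trH : H -> 'I_t) (ltH : rel H).
Hypothesis partition_f : H_partition f.
Hypothesis layering_L : layering L.
Hypothesis width_L : forall x i, #|[set v : G | (f v == x) && (L v == i)]| <= l.
Hypothesis layout_H : track_layout trH ltH.

Let bag (x : H) i := [set v : G | (f v == x) && (L v == i)].

Definition bag_rank v := index v (enum (bag (f v) (L v))).

Lemma bag_rank_lt v : bag_rank v < l.
Proof.
apply: leq_trans (width_L (f v) (L v)).
by rewrite cardE index_mem mem_enum inE !eqxx.
Qed.

Lemma bag_rank_inj u v :
  f u = f v -> L u = L v -> bag_rank u = bag_rank v -> u = v.
Proof.
rewrite /bag_rank => fuv Luv; rewrite fuv Luv => ruv.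
have uS : u \in enum (bag (f v) (L v)) by rewrite mem_enum inE fuv Luv !eqxx.
have vS : v \in enum (bag (f v) (L v)) by rewrite mem_enum inE !eqxx.
by rewrite -(nth_index u uS) ruv (nth_index u vS).
Qed.

Definition product_track (v : G) : 'I_t * 'I_3 * 'I_l :=
  (trH (f v), Ordinal (ltn_pmod (L v) (isT : 0 < 3)), Ordinal (bag_rank_lt v)).

Definition product_lt (u v : G) :=
  (L u < L v) || ((L u == L v) && ltH (f u) (f v)).

Lemma product_trackE u v : product_track u = product_track v ->
  [/\ trH (f u) = trH (f v), L u = L v %[mod 3] & bag_rank u = bag_rank v].
Proof. by case. Qed.

Lemma adj_same_Htrack u v :
  adj u v -> trH (f u) = trH (f v) -> f u = f v.
Proof.
case: layout_H => indepH _ _ _ _ uv et.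
by case: (partition_f uv) => // /indepH; rewrite et eqxx.
Qed.

Lemma adj_other_Htrack u v :
  adj u v -> trH (f u) != trH (f v) -> adj (f u) (f v).
Proof. by move=> uv; case: (partition_f uv) => // ->; rewrite eqxx. Qed.

Lemma product_track_indep u v : adj u v -> product_track u != product_track v.
Proof.
move=> uv; apply/eqP => /product_trackE [et eL er].
have uv_eq := bag_rank_inj (adj_same_Htrack uv et) (layering_mod3 layering_L uv eL) er.
by move: uv; rewrite uv_eq adj_irr.
Qed.

Lemma product_lt_trans u v w : product_track u = product_track v ->
  product_track v = product_track w -> product_lt u v -> product_lt v w ->
  product_lt u w.
Proof.
case: layout_H => _ _ transH _ _ /product_trackE [uv _ _] /product_trackE [vw _ _].
rewrite /product_lt; case/orP => [Luv|/andP [/eqP Luv ltuv]];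
  case/orP => [Lvw|/andP [/eqP Lvw ltvw]].
- by rewrite (ltn_trans Luv Lvw).
- by rewrite -Lvw Luv.
- by rewrite Luv Lvw.
- by rewrite Luv Lvw eqxx (transH _ _ _ uv vw ltuv ltvw) orbT.
Qed.

Lemma product_lt_total u v : product_track u = product_track v -> u != v ->
  product_lt u v || product_lt v u.
Proof.
case: layout_H => _ _ _ totalH _ /product_trackE [et eL er] nuv.
rewrite /product_lt; case: (ltngtP (L u) (L v)) => //= Luv.
have nf : f u != f v by apply: contra nuv => /eqP fuv; rewrite (bag_rank_inj fuv Luv er).
by rewrite ?Luv ?eqxx /= (totalH _ _ et nf).
Qed.

(* The order gives L u <= L x and L y <= L v, the edges give |L u - L v| <= 1
   and |L x - L y| <= 1, and the congruences mod 3 then force equality. *)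
Lemma crossing_layers u v x y : adj u v -> adj x y ->
  L u = L x %[mod 3] -> L v = L y %[mod 3] ->
  product_lt u x -> product_lt y v -> L u = L x /\ L y = L v.
Proof.
move=> /layering_L /andP [? ?] /layering_L /andP [? ?] ? ?.
by rewrite /product_lt => /orP [?|/andP [/eqP ? _]] /orP [?|/andP [/eqP ? _]]; lia.
Qed.

Lemma product_no_crossing u v x y : adj u v -> adj x y ->
  product_track u = product_track x -> product_track v = product_track y ->
  product_track u != product_track v -> product_lt u x -> product_lt y v -> False.
Proof.
case: layout_H => _ irrH transH _ noXH uv xy ux vy _ ltux ltyv.
have [[tux Lux _] [tvy Lvy _]] := (product_trackE ux, product_trackE vy).
have [eux eyv] := crossing_layers uv xy Lux Lvy ltux ltyv.
move: ltux ltyv; rewrite /product_lt eux eyv !ltnn !eqxx /= => ltux ltyv.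
have [et|nt] := eqVneq (trH (f u)) (trH (f v)).
- have fuv := adj_same_Htrack uv et.
  have fxy : f x = f y by apply: (adj_same_Htrack xy); rewrite -tux -tvy.
  move: ltyv; rewrite -fxy -fuv => ltxu.
  by move: (irrH (f u)); rewrite (transH _ _ _ tux (esym tux) ltux ltxu).
- apply: (noXH _ _ _ _ (adj_other_Htrack uv nt) _ tux tvy nt ltux ltyv).
  by apply: (adj_other_Htrack xy); rewrite -tux -tvy.
Qed.

Lemma product_layout : track_layout_over product_track product_lt.
Proof.
split.
- exact: product_track_indep.
- by case: layout_H => _ irrH _ _ _ u; rewrite /product_lt ltnn eqxx irrH.
- exact: product_lt_trans.
- exact: product_lt_total.
- exact: product_no_crossing.
Qed.

End ProductLayout.

Theorem lemma7 (G H : graph) (l : nat) (f : G -> H) :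
  1 <= l -> H_partition f -> layered_width f = l ->
  tn G <= 3 * l * tn H.
Proof.
move=> _ partition_f <-.
have [L [layering_L width_L]] := layered_widthP f.
have [trH [ltH layout_H]] := tnP H.
apply/tn_min/(track_layout_overP (product_layout partition_f layering_L width_L layout_H)).
by rewrite !card_prod !card_ord; lia.
Qed.
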